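(* Let $\{w^k\}$ be generated by the L-GADMM iteration and $\{\bar w^k\}$ be the auxiliary sequence. Then for every $k\ge0$, $$(\bar w^k-\bar w^{k+1})^\top Q\big\{(w^k-w^{k+1})-(\bar w^k-\bar w^{k+1})\big\}\ge0.$$
   Context: Standing setting. Let $m\ge 2$, $\ell$, $n_1,\dots,n_m$ be positive integers. For $i=1,\dots,m$ let $\theta_i:\mathbb{R}^{n_i}\to\mathbb{R}$ be convex, $\mathcal{X}_i\subseteq\mathbb{R}^{n_i}$ nonempty closed convex, $A_i\in\mathbb{R}^{\ell\times n_i}$ of full column rank, and $b\in\mathbb{R}^\ell$. Problem (P): $\min\{\sum_{i=1}^m\theta_i(x_i):\sum_{i=1}^mA_ix_i=b,\ x_i\in\mathcal{X}_i\}$, assumed to have a nonempty solution set. Write $u=(x_1,\dots,x_m)$, $w=(x_1,\dots,x_m,y)$ with $y\in\mathbb{R}^\ell$, $\theta(u)=\sum_i\theta_i(x_i)$, $F(w)=(-A_1^\top y,\dots,-A_m^\top y,\ \sum_iA_ix_i-b)$, $\mathcal{W}=\mathcal{X}_1\times\cdots\times\mathcal{X}_m\times\mathbb{R}^\ell$, and $\mathcal{W}^*=\{w^*\in\mathcal{W}:\theta(u)-\theta(u^* )+(w-w^* )^\top F(w^* )\ge0\ \forall w\in\mathcal{W}\}$ (nonempty). For symmetric $G$, $\|v\|_G^2:=v^\top Gv$; $\|\cdot\|$ is the Euclidean norm. Vectors are partitioned as $w=(R,x_m,y)$ with $R=(x_1,\dots,x_{m-1})$. Parameters: $\rho>0$,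 $\gamma\in(0,2)$, symmetric positive definite $P_i\in\mathbb{R}^{n_i\times n_i}$ ($i=1,\dots,m$) such that $G_1\succ0$, where $G_1$ is the symmetric block matrix with diagonal blocks $P_1,\dots,P_{m-1}$ and $(i,j)$ block $-\rho A_i^\top A_j$ for $i\ne j$, $1\le i,j\le m-1$. Matrices (w.r.t. the partition $(R,x_m,y)$): $Q=\begin{pmatrix}G_1&0&0\\0&\rho A_m^\top A_m+P_m&(1-\gamma)A_m^\top\\0&-A_m&\frac1\rho I_\ell\end{pmatrix}$, $M=\begin{pmatrix}I&0&0\\0&I_{n_m}&0\\0&-\rho A_m&\gamma I_\ell\end{pmatrix}$, $H=\begin{pmatrix}G_1&0&0\\0&P_m+\frac\rho\gamma A_m^\top A_m&\frac{1-\gamma}\gamma A_m^\top\\0&\frac{1-\gamma}\gamma A_m&\frac1{\gamma\rho}I_\ell\end{pmatrix}$, $N=Q^\top+Q-M^\top HM$. L-GADMM iteration: from an arbitrary $w^0=(x_1^0,\dots,x_m^0,y^0)\in\mathcal{W}$, for $k=0,1,2,\dots$: $x_j^{k+1}=\arg\min_{x_j\in\mathcal{X}_j}\{\theta_j(x_j)+\frac\rho2\|A_jx_j+\sum_{i=1,i\ne j}^mA_ix_i^k-b-\frac{y^k}\rho\|^2+\frac12\|x_j-x_j^k\|_{P_j}^2\}$ for $j=1,\dots,m-1$; $x_m^{k+1}=\arg\min_{x_m\in\mathcal{X}_m}\{\theta_m(x_m)+\frac\rho2\|\gamma\sum_{i=1}^{m-1}A_ix_i^{k+1}+(1-\gamma)(b-A_mx_m^k)+A_mx_m-b-\frac{y^k}\rho\|^2+\frac12\|x_m-x_m^k\|_{P_m}^2\}$;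 $y^{k+1}=y^k-\rho\big(\gamma\sum_{i=1}^{m-1}A_ix_i^{k+1}+(1-\gamma)(b-A_mx_m^k)+A_mx_m^{k+1}-b\big)$. Auxiliary sequence: $\bar w^k=(\bar x_1^k,\dots,\bar x_m^k,\bar y^k)$ with $\bar x_i^k=x_i^{k+1}$ ($i=1,\dots,m$) and $\bar y^k=y^k-\rho(\sum_{i=1}^{m-1}A_ix_i^{k+1}+A_mx_m^k-b)$; $\bar u^k=(\bar x_1^k,\dots,\bar x_m^k)$, $R^k=(x_1^k,\dots,x_{m-1}^k)$, $\bar R^k=(\bar x_1^k,\dots,\bar x_{m-1}^k)$. *)

From HB Require Import structures.
From mathcomp Require Import all_boot all_order all_algebra.
From mathcomp Require Import all_classical all_reals all_analysis.
Set Implicit Arguments. Unset Strict Implicit. Unset Printing Implicit Defensive.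
Import Order.TTheory GRing.Theory Num.Theory.
Import numFieldNormedType.Exports.
Local Open Scope ring_scope.
Local Open Scope classical_set_scope.

Definition dotv (R : realType) (p : nat) (u v : 'cV[R]_p) : R := (u^T *m v) 0 0.

Definition sqnormG (R : realType) (p : nat) (G : 'M[R]_p) (v : 'cV[R]_p) : R :=
  dotv v (G *m v).

Definition sqnorm (R : realType) (p : nat) (v : 'cV[R]_p) : R := dotv v v.

Definition convex_fun (R : realType) (p : nat) (f : 'cV[R]_p -> R) : Prop :=
  forall (x y : 'cV[R]_p) (t : R), 0 <= t -> t <= 1 ->
    f (t *: x + (1 - t) *: y) <= t * f x + (1 - t) * f y.

Definition spd (R : realType) (p : nat) (P : 'M[R]_p) : Prop :=
  P^T = P /\ forall v : 'cV[R]_p, v != 0 -> 0 < sqnormG P v.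

Definition lastIdx (m : nat) (hm : (0 < m)%N) : 'I_m :=
  Ordinal (m := m.-1) (n := m) (ltac:(rewrite ltn_predL; exact hm)).

Definition blk (R : realType) (m : nat) (n : 'I_m -> nat) :=
  forall i : 'I_m, 'cV[R]_(n i).

Definition Asum (R : realType) (m l : nat) (n : 'I_m -> nat)
  (A : forall i : 'I_m, 'M[R]_(l, n i)) (x : blk R n) : 'cV[R]_l :=
  \sum_(i < m) A i *m x i.

(* sum_{i=1}^{m-1} A_i x_i *)
Definition Asum_R (R : realType) (m l : nat) (n : 'I_m -> nat)
  (A : forall i : 'I_m, 'M[R]_(l, n i)) (x : blk R n) : 'cV[R]_l :=
  \sum_(i < m | (i < m.-1)%N) A i *m x i.

Definition Asum_but (R : realType) (m l : nat) (n : 'I_m -> nat)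
  (A : forall i : 'I_m, 'M[R]_(l, n i)) (j : 'I_m) (x : blk R n) : 'cV[R]_l :=
  \sum_(i < m | i != j) A i *m x i.

Definition theta_sum (R : realType) (m : nat) (n : 'I_m -> nat)
  (theta : forall i : 'I_m, 'cV[R]_(n i) -> R) (x : blk R n) : R :=
  \sum_(i < m) theta i (x i).

(* R-part bilinear form: R_v^T G1 R_u, G1 with diagonal blocks P_i and
   off-diagonal blocks -rho A_i^T A_j  (1 <= i,j <= m-1) *)
Definition G1form (R : realType) (m l : nat) (n : 'I_m -> nat)
  (A : forall i : 'I_m, 'M[R]_(l, n i)) (P : forall i : 'I_m, 'M[R]_(n i))
  (rho : R) (v u : blk R n) : R :=
  \sum_(i < m | (i < m.-1)%N)
     (dotv (v i) (P i *m u i)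
      + \sum_(j < m | (j < m.-1)%N && (j != i))
          dotv (v i) ((- rho) *: ((A i)^T *m (A j *m u j)))).

(* w_v^T Q w_u, with Q written blockwise w.r.t. the partition (R, x_m, y) *)
Definition Qform (R : realType) (m l : nat) (n : 'I_m -> nat) (hm : (0 < m)%N)
  (A : forall i : 'I_m, 'M[R]_(l, n i)) (P : forall i : 'I_m, 'M[R]_(n i))
  (rho gamma : R) (vx : blk R n) (vy : 'cV[R]_l) (ux : blk R n) (uy : 'cV[R]_l) : R :=
  let im := lastIdx hm in
  G1form A P rho vx ux
  + dotv (vx im) ((rho *: ((A im)^T *m A im) + P im) *m ux im
                  + (1 - gamma) *: ((A im)^T *m uy))
  + dotv vy (- (A im *m ux im) + rho^-1 *: uy).

(* Each block of an L-GADMM step minimizes a convex function plus a strongly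
   convex quadratic, so its first-order optimality condition is a variational
   inequality.  Summed over the blocks, these say that the auxiliary point
   wbar^k satisfies, for every w in W,
     theta(u) - theta(ubar^k) + (w - wbar^k)^T F(wbar^k)
       >= (w - wbar^k)^T Q (w^k - wbar^k).
   Take w = wbar^(k+1) in this inequality at step k and w = wbar^k at step
   k+1 and add: the theta terms cancel, and so do the F terms because F is
   affine with a skew-symmetric linear part. *)
From HB Require Import structures.
From mathcomp Require Import all_boot all_order all_algebra.
From mathcomp Require Import all_classical all_reals all_analysis.
From mathcomp Require Import ring lra.
Set Implicit Arguments. Unset Strict Implicit. Unset Printing Implicit Defensive.
Import Order.TTheory GRing.Theory Num.Theory.
Import numFieldNormedType.Exports.
Local Open Scope ring_scope.
Local Open Scope classical_set_scope.

Section Dotv.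
Variables (R : realType) (p : nat).
Implicit Types u v w : 'cV[R]_p.

Lemma dotvDl u v w : dotv (u + v) w = dotv u w + dotv v w.
Proof. by rewrite /dotv linearD /= mulmxDl mxE. Qed.

Lemma dotvDr u v w : dotv u (v + w) = dotv u v + dotv u w.
Proof. by rewrite /dotv mulmxDr mxE. Qed.

Lemma dotvZl a u v : dotv (a *: u) v = a * dotv u v.
Proof. by rewrite /dotv linearZ /= -scalemxAl mxE. Qed.

Lemma dotvZr a u v : dotv u (a *: v) = a * dotv u v.
Proof. by rewrite /dotv -scalemxAr mxE. Qed.

Lemma dotvNl u v : dotv (- u) v = - dotv u v.
Proof. by rewrite -scaleN1r dotvZl mulN1r. Qed.

Lemma dotvNr u v : dotv u (- v) = - dotv u v.
Proof. by rewrite -scaleN1r dotvZr mulN1r. Qed.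

Lemma dotvBl u v w : dotv (u - v) w = dotv u w - dotv v w.
Proof. by rewrite dotvDl dotvNl. Qed.

Lemma dotvBr u v w : dotv u (v - w) = dotv u v - dotv u w.
Proof. by rewrite dotvDr dotvNr. Qed.

Lemma dotvC u v : dotv u v = dotv v u.
Proof. by rewrite /dotv -[v^T *m u]trmxK trmx_mul trmxK [in RHS]mxE. Qed.

Lemma dotv_sumr I (r : seq I) (P : pred I) (F : I -> 'cV[R]_p) u :
  dotv u (\sum_(i <- r | P i) F i) = \sum_(i <- r | P i) dotv u (F i).
Proof.
by apply: (big_morph (dotv u) (dotvDr u)); rewrite /dotv mulmx0 mxE.
Qed.

Lemma dotv_suml I (r : seq I) (P : pred I) (F : I -> 'cV[R]_p) u :
  dotv (\sum_(i <- r | P i) F i) u = \sum_(i <- r | P i) dotv (F i) u.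
Proof. by rewrite dotvC dotv_sumr; apply: eq_bigr => i _; rewrite dotvC. Qed.

End Dotv.

Lemma dotv_mulmxr (R : realType) p q (M : 'M[R]_(p, q)) u v :
  dotv u (M *m v) = dotv (M^T *m u) v.
Proof. by rewrite /dotv trmx_mul trmxK mulmxA. Qed.

Lemma dotv_trmxr (R : realType) p q (M : 'M[R]_(p, q)) u v :
  dotv u (M^T *m v) = dotv (M *m u) v.
Proof. by rewrite dotv_mulmxr trmxK. Qed.

Lemma lin_coef_ge0 (R : realType) (a c : R) :
  (forall t, 0 < t -> t <= 1 -> 0 <= t * a + t ^+ 2 * c) -> 0 <= a.
Proof.
move=> H; rewrite leNgt; apply/negP => a_lt0.
pose c' := `|c| + 1; pose d := c' - a; pose t := - a / d.
have c'_gt0 : 0 < c' by rewrite ltr_pwDr // normr_ge0.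
have c_le : c <= c' by rewrite ler_wpDr // ler_norm.
have d_gt0 : 0 < d by rewrite /d; lra.
have tE : t * d = - a by rewrite mulfVK // gt_eqF.
have t_gt0 : 0 < t by rewrite divr_gt0 // oppr_gt0.
have t_le1 : t <= 1 by rewrite ler_pdivrMr // mul1r /d; lra.
have : t ^+ 2 * c <= t ^+ 2 * c' by rewrite ler_wpM2l // exprn_ge0 // ltW.
have := H t t_gt0 t_le1.
(* a + t c' = - a ^+ 2 / d < 0, so the left side is negative *)
have prodE : (a + t * c') * d = - a ^+ 2.
  by rewrite mulrDl -mulrA (mulrC c') mulrA tE /d; ring.
have : a + t * c' < 0.
  by rewrite -(pmulr_llt0 _ d_gt0) prodE; nra.
nra.
Qed.

Lemma sqnormDZ (R : realType) p (u v : 'cV[R]_p) t :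
  sqnorm (u + t *: v) = sqnorm u + 2 * t * dotv u v + t ^+ 2 * sqnorm v.
Proof.
by rewrite /sqnorm !(dotvDl, dotvDr, dotvZl, dotvZr) [dotv v u]dotvC; ring.
Qed.

Lemma sqnormGDZ (R : realType) p (P : 'M[R]_p) (u v : 'cV[R]_p) t :
  P^T = P ->
  sqnormG P (u + t *: v) =
    sqnormG P u + 2 * t * dotv v (P *m u) + t ^+ 2 * sqnormG P v.
Proof.
move=> PT; have PuvE : dotv u (P *m v) = dotv v (P *m u).
  by rewrite dotv_mulmxr PT dotvC.
rewrite /sqnormG mulmxDr -scalemxAr !(dotvDl, dotvDr, dotvZl, dotvZr) PuvE.
ring.
Qed.

Lemma proximal_argmin_vi (R : realType) p l (f : 'cV[R]_p -> R)
    (C : set 'cV[R]_p) (A : 'M[R]_(l, p)) (c : 'cV[R]_l) (P : 'M[R]_p)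
    (x0 xs : 'cV[R]_p) (rho : R) :
  convex_fun f -> convex_set C -> C xs -> P^T = P ->
  (forall z, C z ->
     f xs + rho / 2 * sqnorm (A *m xs + c) + 1 / 2 * sqnormG P (xs - x0)
     <= f z + rho / 2 * sqnorm (A *m z + c) + 1 / 2 * sqnormG P (z - x0)) ->
  forall z, C z ->
    0 <= f z - f xs + dotv (A *m (z - xs)) (rho *: (A *m xs + c))
         + dotv (z - xs) (P *m (xs - x0)).
Proof.
move=> f_cvx C_cvx Cxs PT xs_min z Cz; set d := z - xs.
(* Along xs + t d the objective grows by t * (the claimed quantity) + O(t^2). *)
apply: (@lin_coef_ge0 R _ (rho / 2 * sqnorm (A *m d) + 1 / 2 * sqnormG P d))
  => t t_gt0 t_le1.
pose zt := t *: z + (1 - t) *: xs.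
have Czt : C zt.
  by have := C_cvx z xs (Itv01 (ltW t_gt0) t_le1) (mem_set Cz) (mem_set Cxs);
    rewrite inE.
have ztE : zt = xs + t *: d by apply/matrixP => i j; rewrite !mxE; ring.
have f_zt : f zt <= t * f z + (1 - t) * f xs := f_cvx z xs t (ltW t_gt0) t_le1.
have AztE : A *m zt + c = (A *m xs + c) + t *: (A *m d).
  by rewrite ztE mulmxDr -scalemxAr addrAC.
have ztx0E : zt - x0 = (xs - x0) + t *: d by rewrite ztE addrAC.
have := xs_min zt Czt.
rewrite AztE ztx0E sqnormDZ sqnormGDZ // dotvZr [dotv (A *m d) _]dotvC.
nra.
Qed.

Lemma neq_lastIdx_ltn m (i : 'I_m) : (0 < m)%N -> (val i != m.-1) = (i < m.-1)%N.
Proof.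
move=> m_gt0; have := ltn_ord i; case: i => i /= lt_im _.
apply/idP/idP => [|lt_i]; last by rewrite neq_ltn lt_i.
rewrite neq_ltn => /orP [//|gt_i]; exfalso.
by move: lt_im; rewrite -(prednK m_gt0) ltnS leqNgt gt_i.
Qed.

Lemma sum_lastIdx (V : zmodType) m (hm : (0 < m)%N) (F : 'I_m -> V) :
  \sum_(i < m) F i = \sum_(i < m | (i < m.-1)%N) F i + F (lastIdx hm).
Proof.
rewrite (bigD1 (lastIdx hm)) //= addrC; congr (_ + _); apply: eq_bigl => i.
by rewrite -val_eqE /= neq_lastIdx_ltn.
Qed.

Lemma sum_but_lastIdx (V : zmodType) m (hm : (0 < m)%N) (F : 'I_m -> V)
    (j : 'I_m) : (j < m.-1)%N ->
  \sum_(i < m | i != j) F i =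
  \sum_(i < m | (i < m.-1)%N && (i != j)) F i + F (lastIdx hm).
Proof.
move=> lt_j; have last_neq_j : lastIdx hm != j.
  by rewrite -val_eqE /= neq_ltn lt_j orbT.
rewrite (bigD1 (lastIdx hm)) //= addrC; congr (_ + _); apply: eq_bigl => i.
by rewrite -val_eqE /= neq_lastIdx_ltn // andbC.
Qed.

Lemma ord_lastIdx m (hm : (0 < m)%N) (i : 'I_m) :
  ~~ (i < m.-1)%N -> i = lastIdx hm.
Proof. by rewrite -neq_lastIdx_ltn // negbK => /eqP i_last; apply: val_inj. Qed.

Section BlockForms.
Variables (R : realType) (m l : nat) (n : 'I_m -> nat).
Variables (A : forall i : 'I_m, 'M[R]_(l, n i)) (P : forall i : 'I_m, 'M[R]_(n i)).
Variable rho : R.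

Definition Asum_R_but (j : 'I_m) (u : blk R n) : 'cV[R]_l :=
  \sum_(i < m | (i < m.-1)%N && (i != j)) A i *m u i.

Lemma Asum_R_butB j (u v : blk R n) :
  Asum_R_but j (fun i => u i - v i) = Asum_R_but j u - Asum_R_but j v.
Proof. by rewrite /Asum_R_but -sumrB; apply: eq_bigr => i _; rewrite mulmxBr. Qed.

Lemma G1form_row (v u : blk R n) (j : 'I_m) :
  \sum_(i < m | (i < m.-1)%N && (i != j))
     dotv (v j) ((- rho) *: ((A j)^T *m (A i *m u i)))
  = - rho * dotv (A j *m v j) (Asum_R_but j u).
Proof.
rewrite /Asum_R_but dotv_sumr mulr_sumr; apply: eq_bigr => i _.
by rewrite dotvZr dotv_trmxr.
Qed.

Lemma G1formBr (v u1 u2 : blk R n) :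
  G1form A P rho v (fun i => u1 i - u2 i) =
  G1form A P rho v u1 - G1form A P rho v u2.
Proof.
rewrite /G1form -sumrB; apply: eq_bigr => j _.
rewrite mulmxBr dotvBr opprD addrACA -sumrB; congr (_ + _).
by apply: eq_bigr => i _; rewrite mulmxBr mulmxBr scalerBr dotvBr.
Qed.

Lemma G1formNl (v u : blk R n) :
  G1form A P rho (fun i => - v i) u = - G1form A P rho v u.
Proof.
rewrite /G1form -sumrN; apply: eq_bigr => j _.
by rewrite dotvNl opprD -sumrN; congr (_ + _); apply: eq_bigr => i _; rewrite dotvNl.
Qed.

Variables (hm : (0 < m)%N) (gamma : R).

Lemma QformBr (v : blk R n) vy (u1 u2 : blk R n) uy1 uy2 :
  Qform hm A P rho gamma v vy (fun i => u1 i - u2 i) (uy1 - uy2) =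
  Qform hm A P rho gamma v vy u1 uy1 - Qform hm A P rho gamma v vy u2 uy2.
Proof.
by rewrite /Qform G1formBr !(mulmxBr, scalerBr, dotvBr, dotvDr, dotvNr); ring.
Qed.

Lemma QformNl (v : blk R n) vy (u : blk R n) uy :
  Qform hm A P rho gamma (fun i => - v i) (- vy) u uy =
  - Qform hm A P rho gamma v vy u uy.
Proof. by rewrite /Qform G1formNl !dotvNl !opprD. Qed.

End BlockForms.

Section SkewOperator.
Variables (R : realType) (m l : nat) (n : 'I_m -> nat).
Variables (A : forall i : 'I_m, 'M[R]_(l, n i)) (b : 'cV[R]_l).

(* (v, vy)^T F(xb, yb), where F(x, y) = (- A_1^T y, ..., - A_m^T y, Asum A x - b) *)
Definition dotF (v : blk R n) (vy : 'cV[R]_l) (xb : blk R n) (yb : 'cV[R]_l) : R :=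
  dotv vy (Asum A xb - b) - dotv (Asum A v) yb.

Lemma AsumB (u v : blk R n) : Asum A (fun i => u i - v i) = Asum A u - Asum A v.
Proof. by rewrite /Asum -sumrB; apply: eq_bigr => i _; rewrite mulmxBr. Qed.

Lemma dotF_skew (u : blk R n) uy (v : blk R n) vy :
  dotF (fun i => u i - v i) (uy - vy) v vy
  + dotF (fun i => v i - u i) (vy - uy) u uy = 0.
Proof.
by rewrite /dotF !AsumB !(dotvBl, dotvBr) ![dotv (Asum A _) _]dotvC; ring.
Qed.

End SkewOperator.

Section LGADMM.
Variables (R : realType) (m l : nat) (n : 'I_m -> nat) (hm : (0 < m)%N).
(* Otherwise the block index of [theta], [X] and of the hypotheses below
   would become implicit. *)
Local Unset Implicit Arguments.
Variables (theta : forall i : 'I_m, 'cV[R]_(n i) -> R)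
  (X : forall i : 'I_m, set 'cV[R]_(n i)).
Variables (A : forall i : 'I_m, 'M[R]_(l, n i)) (b : 'cV[R]_l)
  (P : forall i : 'I_m, 'M[R]_(n i)) (rho gamma : R).
Variables (x : nat -> blk R n) (y : nat -> 'cV[R]_l).

Local Notation im := (lastIdx hm).

Hypothesis theta_convex : forall i, convex_fun (theta i).
Hypothesis X_convex : forall i, convex_set (X i).
Hypothesis rho_neq0 : rho != 0.
Hypothesis P_sym : forall i, (P i)^T = P i.

Hypothesis x_step : forall (k : nat) (j : 'I_m), (j < m.-1)%N ->
  X j (x k.+1 j) /\
  forall z : 'cV[R]_(n j), X j z ->
    theta j (x k.+1 j)
      + rho / 2 * sqnorm (A j *m x k.+1 j + Asum_but A j (x k) - b - rho^-1 *: y k)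
      + 1 / 2 * sqnormG (P j) (x k.+1 j - x k j)
    <= theta j z
      + rho / 2 * sqnorm (A j *m z + Asum_but A j (x k) - b - rho^-1 *: y k)
      + 1 / 2 * sqnormG (P j) (z - x k j).

Hypothesis x_step_last : forall k : nat,
  X im (x k.+1 im) /\
  forall z : 'cV[R]_(n im), X im z ->
    theta im (x k.+1 im)
      + rho / 2 * sqnorm (gamma *: Asum_R A (x k.+1)
                          + (1 - gamma) *: (b - A im *m x k im)
                          + A im *m x k.+1 im - b - rho^-1 *: y k)
      + 1 / 2 * sqnormG (P im) (x k.+1 im - x k im)
    <= theta im z
      + rho / 2 * sqnorm (gamma *: Asum_R A (x k.+1)
                          + (1 - gamma) *: (b - A im *m x k im)
                          + A im *m z - b - rho^-1 *: y k)
      + 1 / 2 * sqnormG (P im) (z - x k im).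

Definition ybar (k : nat) : 'cV[R]_l :=
  y k - rho *: (Asum_R A (x k.+1) + A im *m x k im - b).

Lemma x_in_X k i : X i (x k.+1 i).
Proof.
have [lt_i|not_lt_i] := boolP (i < m.-1)%N; first exact: (x_step k i lt_i).1.
by rewrite (ord_lastIdx hm not_lt_i); exact: (x_step_last k).1.
Qed.

Lemma Asum_xbar_residual k :
  - (A im *m (x k im - x k.+1 im)) + rho^-1 *: (y k - ybar k)
  = Asum A (x k.+1) - b.
Proof.
rewrite /ybar /Asum (sum_lastIdx hm) /Asum_R mulmxBr.
by apply/matrixP => a c; rewrite !mxE; field.
Qed.

Lemma vi_block k (j : 'I_m) z : (j < m.-1)%N -> X j z ->
  dotv (z - x k.+1 j) (P j *m (x k j - x k.+1 j))
  - rho * dotv (A j *m (z - x k.+1 j)) (Asum_R_but A j (fun i => x k i - x k.+1 i))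
  <= theta j z - theta j (x k.+1 j) - dotv (A j *m (z - x k.+1 j)) (ybar k).
Proof.
move=> lt_j Xz; have [Xx x_min] := x_step k j lt_j.
pose c := Asum_but A j (x k) - b - rho^-1 *: y k.
have residualE : rho *: (A j *m x k.+1 j + c)
    = - ybar k + rho *: Asum_R_but A j (fun i => x k i - x k.+1 i).
  rewrite /ybar /c /Asum_R (bigD1 j) //= /Asum_but (sum_but_lastIdx hm) //.
  rewrite Asum_R_butB /Asum_R_but.
  by apply/matrixP => a e; rewrite !mxE; field.
have x_min_c : forall z, X j z ->
    theta j (x k.+1 j) + rho / 2 * sqnorm (A j *m x k.+1 j + c)
      + 1 / 2 * sqnormG (P j) (x k.+1 j - x k j)
    <= theta j z + rho / 2 * sqnorm (A j *m z + c)
      + 1 / 2 * sqnormG (P j) (z - x k j).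
  by move=> z' /x_min; rewrite /c !addrA.
have := proximal_argmin_vi (theta_convex j) (X_convex j) Xx (P_sym j) x_min_c Xz.
rewrite residualE !(mulmxBr, dotvBr, dotvDr, dotvNr, dotvZr).
lra.
Qed.

Lemma vi_block_last k z : X im z ->
  dotv (z - x k.+1 im)
    ((rho *: ((A im)^T *m A im) + P im) *m (x k im - x k.+1 im)
     + (1 - gamma) *: ((A im)^T *m (y k - ybar k)))
  <= theta im z - theta im (x k.+1 im) - dotv (A im *m (z - x k.+1 im)) (ybar k).
Proof.
move=> Xz; have [Xx x_min] := x_step_last k.
pose c := gamma *: Asum_R A (x k.+1) + (1 - gamma) *: (b - A im *m x k im)
          - b - rho^-1 *: y k.
have cE z' : gamma *: Asum_R A (x k.+1) + (1 - gamma) *: (b - A im *m x k im)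
             + A im *m z' - b - rho^-1 *: y k = A im *m z' + c.
  by apply/matrixP => a e; rewrite !mxE; ring.
have residualE : rho *: (A im *m x k.+1 im + c) = - ybar k
    - (1 - gamma) *: (y k - ybar k) - rho *: (A im *m (x k im - x k.+1 im)).
  by rewrite /ybar /c mulmxBr; apply/matrixP => a e; rewrite !mxE; field.
have x_min_c : forall z, X im z ->
    theta im (x k.+1 im) + rho / 2 * sqnorm (A im *m x k.+1 im + c)
      + 1 / 2 * sqnormG (P im) (x k.+1 im - x k im)
    <= theta im z + rho / 2 * sqnorm (A im *m z + c)
      + 1 / 2 * sqnormG (P im) (z - x k im).
  by move=> z'; rewrite -!cE; exact: x_min.
have := proximal_argmin_vi (theta_convex im) (X_convex im) Xx (P_sym im) x_min_c Xz.
rewrite residualE mulmxDl -scalemxAl -mulmxA.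
rewrite !(mulmxBr, dotvBr, dotvDr, dotvNr, dotvZr, dotv_trmxr).
lra.
Qed.

Lemma vi_wbar k (u : blk R n) yy : (forall i, X i (u i)) ->
  Qform hm A P rho gamma (fun i => u i - x k.+1 i) (yy - ybar k)
    (fun i => x k i - x k.+1 i) (y k - ybar k)
  <= theta_sum theta u - theta_sum theta (x k.+1)
     + dotF A b (fun i => u i - x k.+1 i) (yy - ybar k) (x k.+1) (ybar k).
Proof.
move=> Xu.
pose g j := theta j (u j) - theta j (x k.+1 j)
            - dotv (A j *m (u j - x k.+1 j)) (ybar k).
have rhsE : theta_sum theta u - theta_sum theta (x k.+1)
    - dotv (Asum A (fun i => u i - x k.+1 i)) (ybar k)
    = \sum_(j < m | (j < m.-1)%N) g j + g im.
  by rewrite /theta_sum /Asum dotv_suml -!sumrB (sum_lastIdx hm).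
have G1_le : G1form A P rho (fun i => u i - x k.+1 i) (fun i => x k i - x k.+1 i)
    <= \sum_(j < m | (j < m.-1)%N) g j.
  apply: ler_sum => j lt_j.
  rewrite (G1form_row A rho (fun i => u i - x k.+1 i)) mulNr.
  exact: vi_block k j _ lt_j (Xu j).
have last_le : _ <= g im := vi_block_last k _ (Xu im).
rewrite /Qform /= Asum_xbar_residual /dotF.
lra.
Qed.

Lemma Qform_wbar_ge0 k :
  0 <= Qform hm A P rho gamma (fun i => x k.+1 i - x k.+2 i) (ybar k - ybar k.+1)
         (fun i => (x k i - x k.+1 i) - (x k.+1 i - x k.+2 i))
         ((y k - y k.+1) - (ybar k - ybar k.+1)).
Proof.
have vi_k := vi_wbar k (x k.+2) (ybar k.+1) (x_in_X k.+1).
have vi_k1 := vi_wbar k.+1 (x k.+1) (ybar k) (x_in_X k).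
have skew := dotF_skew A b (x k.+2) (ybar k.+1) (x k.+1) (ybar k).
have swapE : (fun i => x k.+2 i - x k.+1 i) = (fun i => - (x k.+1 i - x k.+2 i)).
  by apply: functional_extensionality_dep => i; rewrite opprB.
rewrite swapE -(opprB (ybar k) (ybar k.+1)) in vi_k skew.
rewrite QformNl in vi_k.
have yE : (y k - y k.+1) - (ybar k - ybar k.+1)
          = (y k - ybar k) - (y k.+1 - ybar k.+1).
  by apply/matrixP => a c; rewrite !mxE; ring.
rewrite yE (QformBr _ _ _ _ _ _ _ (fun i => x k i - x k.+1 i)
                                  (fun i => x k.+1 i - x k.+2 i)).
move: vi_k vi_k1 skew.
set Q := Qform _ _ _ _ _ _ _ (fun i => x k i - x k.+1 i) _.
set Q' := Qform _ _ _ _ _ _ _ (fun i => x k.+1 i - x k.+2 i) _.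
set F := dotF _ _ _ _ (x k.+1) _; set F' := dotF _ _ _ _ (x k.+2) _.
lra.
Qed.

End LGADMM.

Arguments Qform_wbar_ge0 {R m l n hm theta X A b P rho gamma x y}.

Theorem lemma4p2 (R : realType) (m l : nat) (n : 'I_m -> nat)
  (hm : (2 <= m)%N) (hl : (0 < l)%N) (hn : forall i, (0 < n i)%N)
  (theta : forall i : 'I_m, 'cV[R]_(n i) -> R)
  (X : forall i : 'I_m, set 'cV[R]_(n i))
  (A : forall i : 'I_m, 'M[R]_(l, n i)) (b : 'cV[R]_l)
  (P : forall i : 'I_m, 'M[R]_(n i)) (rho gamma : R)
  (x : nat -> blk R n) (y : nat -> 'cV[R]_l) :
  (forall i, convex_fun (theta i)) ->
  (forall i, X i !=set0) ->
  (forall i, closed (X i)) ->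
  (forall i, convex_set (X i)) ->
  (forall i, \rank (A i) = n i) ->
  (exists us : blk R n, (forall i, X i (us i)) /\ Asum A us = b /\
     forall u : blk R n, (forall i, X i (u i)) -> Asum A u = b ->
       theta_sum theta us <= theta_sum theta u) ->
  (* W^* is nonempty *)
  (exists (xs : blk R n) (ys : 'cV[R]_l), (forall i, X i (xs i)) /\
     forall (u : blk R n) (yy : 'cV[R]_l), (forall i, X i (u i)) ->
       0 <= theta_sum theta u - theta_sum theta xs
            + \sum_(i < m) dotv (u i - xs i) (- ((A i)^T *m ys))
            + dotv (yy - ys) (Asum A xs - b)) ->
  0 < rho -> 0 < gamma -> gamma < 2 ->
  (forall i, spd (P i)) ->
  (forall v : blk R n, (exists i : 'I_m, (i < m.-1)%N /\ v i != 0) ->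
     0 < G1form A P rho v v) ->
  (forall i, X i (x 0%N i)) ->
  (forall (k : nat) (j : 'I_m), (j < m.-1)%N ->
     X j (x k.+1 j) /\
     forall z : 'cV[R]_(n j), X j z ->
       theta j (x k.+1 j)
         + rho / 2 * sqnorm (A j *m x k.+1 j + Asum_but A j (x k) - b - rho^-1 *: y k)
         + 1 / 2 * sqnormG (P j) (x k.+1 j - x k j)
       <= theta j z
         + rho / 2 * sqnorm (A j *m z + Asum_but A j (x k) - b - rho^-1 *: y k)
         + 1 / 2 * sqnormG (P j) (z - x k j)) ->
  (forall k : nat,
     let im := lastIdx (ltnW hm) in
     X im (x k.+1 im) /\
     forall z : 'cV[R]_(n im), X im z ->
       theta im (x k.+1 im)
         + rho / 2 * sqnorm (gamma *: Asum_R A (x k.+1)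
                             + (1 - gamma) *: (b - A im *m x k im)
                             + A im *m x k.+1 im - b - rho^-1 *: y k)
         + 1 / 2 * sqnormG (P im) (x k.+1 im - x k im)
       <= theta im z
         + rho / 2 * sqnorm (gamma *: Asum_R A (x k.+1)
                             + (1 - gamma) *: (b - A im *m x k im)
                             + A im *m z - b - rho^-1 *: y k)
         + 1 / 2 * sqnormG (P im) (z - x k im)) ->
  (forall k : nat,
     let im := lastIdx (ltnW hm) in
     y k.+1 = y k - rho *: (gamma *: Asum_R A (x k.+1)
                            + (1 - gamma) *: (b - A im *m x k im)
                            + A im *m x k.+1 im - b)) ->
  let im := lastIdx (ltnW hm) in
  let xbar := fun k : nat => x k.+1 in
  let ybar := fun k : nat =>
    y k - rho *: (Asum_R A (x k.+1) + A im *m x k im - b) in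
  forall k : nat,
    0 <= Qform (ltnW hm) A P rho gamma
           (fun i => xbar k i - xbar k.+1 i) (ybar k - ybar k.+1)
           (fun i => (x k i - x k.+1 i) - (xbar k i - xbar k.+1 i))
           ((y k - y k.+1) - (ybar k - ybar k.+1)).
Proof.
move=> theta_convex _ _ X_convex _ _ _ rho_gt0 _ _ P_spd _ _ x_step x_step_last _
  im xbar ybar k.
have P_sym i : (P i)^T = P i by case: (P_spd i).
exact: (Qform_wbar_ge0 theta_convex X_convex (lt0r_neq0 rho_gt0) P_sym
          x_step x_step_last k).
Qed.
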